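(* Let $X$ be a Hausdorff space with $X=Y\cup T$, where $Y$ and $T$ are totally disconnected subspaces and $T$ is compact. Then $\mathcal{K}(X)$ is hereditarily disconnected if and only if the quotient space $X/T$ (obtained by collapsing $T$ to a point) is hereditarily disconnected.
   Context: $\mathcal{K}(X)$ is the set of nonempty compact subsets of $X$ with the Vietoris topology (generated by $U^+=\{A: A\subset U\}$ and $U^-=\{A: A\cap U\neq\emptyset\}$ for $U$ open in $X$). A space is hereditarily disconnected if every nonempty connected subset is a singleton; it is totally disconnected if any two distinct points can be separated by a clopen set. *)

From HB Require Import structures.
From mathcomp Require Import all_boot all_order all_algebra generic_quotient.
From mathcomp Require Import all_classical all_reals all_analysis.

Set Implicit Arguments.
Unset Strict Implicit.
Unset Printing Implicit Defensive.

Local Open Scope classical_set_scope.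

Definition hereditarily_disconnected (T : topologicalType) : Prop :=
  forall A : set T, A !=set0 -> connected A -> exists x : T, A = [set x].

(* Totally disconnected (paper sense) for a subspace A of X: any two distinct
   points of A are separated by a clopen subset of the subspace A.  The
   subspace A is the sigma type [set_type A] with its subspace (initial)
   topology; the library's [zero_dimensional] is exactly the paper's notion. *)
Definition totally_disconnected_subspace (X : topologicalType) (A : set X) :=
  zero_dimensional (set_type A).

Record hyperspace (X : topologicalType) := Hyper {
  hset : set X;
  hset_prop : hset !=set0 /\ compact hset }.

HB.instance Definition _ (X : topologicalType) :=
  gen_eqMixin (hyperspace X).
HB.instance Definition _ (X : topologicalType) :=
  gen_choiceMixin (hyperspace X).

(* subbasis index: (true, U) ~ U^+ , (false, U) ~ U^- , for U open *)
Definition vietoris_index (X : topologicalType) : pointedType :=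
  (bool * set X)%type.

Definition vietoris_sub (X : topologicalType) (i : vietoris_index X)
  : set (hyperspace X) :=
  if i.1 then [set A | hset A `<=` i.2]
  else [set A | hset A `&` i.2 !=set0].

HB.instance Definition _ (X : topologicalType) :=
  @isSubBaseTopological.Build (hyperspace X) (vietoris_index X)
    [set i | open i.2] (@vietoris_sub X).

Definition collapse_rel (X : topologicalType) (T : set X) : rel X :=
  fun x y => (x == y) || `[< T x /\ T y >].

Lemma collapse_refl (X : topologicalType) (T : set X) :
  reflexive (collapse_rel T).
Proof. by move=> x; rewrite /collapse_rel eqxx. Qed.

Lemma collapse_sym (X : topologicalType) (T : set X) :
  symmetric (collapse_rel T).
Proof.
move=> x y; rewrite /collapse_rel eq_sym; congr (_ || _).
by apply/asboolP/asboolP => -[].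
Qed.

Lemma collapse_trans (X : topologicalType) (T : set X) :
  transitive (collapse_rel T).
Proof.
move=> y x z; rewrite /collapse_rel.
case/orP => [/eqP -> //|/asboolP [Tx Ty]].
case/orP => [/eqP <-|/asboolP [_ Tz]]; first by apply/orP; right; apply/asboolP.
by apply/orP; right; apply/asboolP.
Qed.

Canonical collapse_equiv (X : topologicalType) (T : set X) :=
  EquivRel (collapse_rel T) (@collapse_refl X T) (@collapse_sym X T)
    (@collapse_trans X T).

Definition collapse (X : topologicalType) (T : set X) : topologicalType :=
  quotient_topology {eq_quot (collapse_rel T)}%qT.

From HB Require Import structures.
From mathcomp Require Import all_boot all_order all_algebra generic_quotient.
From mathcomp Require Import all_classical all_reals all_analysis.

(* Say that S is connected modulo K when every relatively clopen subset of S
   containing K is all of S.  If X/T is hereditarily disconnected, a set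
   containing T and connected modulo T lies in T.  This propagates to every
   compact K ⊇ T: a set M ⊇ K connected modulo K lies in K.  Indeed, Zorn's
   lemma gives a minimal compact K0 with T ⊆ K0 ⊆ K such that (M \ K) ∪ K0 is
   connected modulo K0; zero-dimensionality of Y allows to cut off from K0 any
   relatively clopen piece avoiding T, so K0 ⊆ T, and then M \ K ⊆ T.
   If 𝒞 is a connected family in K(X) and B ∈ 𝒞, the union of 𝒞 is connected
   modulo B ∪ T, so every member of 𝒞 lies in B ∪ T; a clopen partition of the
   zero-dimensional T then shows that every member lies in B.
   Conversely, x ↦ T ∪ {x} induces a continuous injection X/T → K(X). *)

Set Implicit Arguments.
Unset Strict Implicit.
Unset Printing Implicit Defensive.

Local Open Scope classical_set_scope.

Section Compactness.
Variable X : topologicalType.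
Implicit Types C U : set X.

Lemma compact_directed_cover C (F : set (set X)) :
  compact C -> (forall U, F U -> open U) -> F !=set0 ->
  (forall U1 U2, F U1 -> F U2 -> exists2 U, F U & U1 `|` U2 `<=` U) ->
  C `<=` \bigcup_(U in F) U -> exists2 U, F U & C `<=` U.
Proof.
move=> cC oF [U0 FU0] dirF cov; apply: contrapT => nsub.
pose G := filter_from F (fun U => C `\` U).
have GF : ProperFilter G.
  apply: filter_from_proper; last first.
    move=> U FU; apply: contrapT => CU; apply: nsub; exists U => // x Cx.
    by apply: contrapT => nUx; apply: CU; exists x.
  apply: filter_from_filter; first by exists U0.
  move=> U1 U2 FU1 FU2; have [U FU U12] := dirF _ _ FU1 FU2.
  exists U => // x [Cx nUx].
  by split; split => // ?; apply: nUx; apply: U12; [left|right].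
have GC : G C by exists U0 => // x [].
have [y [Cy clGy]] := cC G GF GC.
have [U FU Uy] := cov y Cy.
have GCU : G (C `\` U) by exists U.
by have [z [ [_ nUz] Uz]] := clGy _ _ GCU (open_nbhs_nbhs (conj (oF _ FU) Uy)).
Qed.

Lemma compact_bigcap_sub_open (I : Type) (D : set I) (A : I -> set X) i0 U :
  D i0 -> compact (A i0) -> (forall i, D i -> closed (A i)) ->
  (forall i j, D i -> D j -> exists2 k, D k & A k `<=` A i `&` A j) ->
  open U -> \bigcap_(i in D) A i `<=` U -> exists2 i, D i & A i `<=` U.
Proof.
move=> Di0 cAi0 clA dirA oU capU.
have [W [i Di eW] Ai0W] : exists2 W, [set U `|` ~` A i | i in D] W & A i0 `<=` W.
  apply: compact_directed_cover => //.
  - by move=> _ [i Di <-]; apply: openU => //; exact/closed_openC/clA.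
  - by exists (U `|` ~` A i0), i0.
  - move=> _ _ [i Di <-] [j Dj <-]; have [k Dk Aij] := dirA _ _ Di Dj.
    exists (U `|` ~` A k); first by exists k.
    by move=> x [] [Ux|nAx]; [left|right => /Aij []|left|right => /Aij []].
  - move=> x _; have [Ux|nUx] := pselect (U x).
      by exists (U `|` ~` A i0); [exists i0|left].
    have [i Di nAix] : exists2 i, D i & ~ A i x.
      apply: contrapT => nE; apply: nUx; apply: capU => i Di.
      by apply: contrapT => nAix; apply: nE; exists i.
    by exists (U `|` ~` A i); [exists i|right].
rewrite -eW in Ai0W.
have [k Dk Aki] := dirA _ _ Di0 Di.
by exists k => // x /Aki [/Ai0W [//|nAix] Aix].
Qed.

End Compactness.

Lemma continuous_inj_hd (S S' : topologicalType) (f : S -> S') :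
  continuous f -> injective f ->
  hereditarily_disconnected S' -> hereditarily_disconnected S.
Proof.
move=> fc finj hd A [a Aa] cA; exists a.
have [y fAy] := hd (f @` A) (ex_intro _ (f a) (ex_intro2 _ _ a Aa erefl))
  (connected_continuous_connected cA (continuous_subspaceT fc)).
apply/seteqP; split => [z Az|_ ->//]; apply: finj.
have fz : (f @` A) (f z) by exists z.
have fa : (f @` A) (f a) by exists a.
by rewrite fAy in fz fa; rewrite fz fa.
Qed.

Section OpenSplit.
Variable X : topologicalType.
Implicit Types S K N U V Z : set X.

Definition open_split S U V :=
  [/\ open U, open V, S `<=` U `|` V & S `&` U `&` V `<=` set0].

Definition connected_mod S K :=
  forall U V, open_split S U V -> K `<=` U -> S `<=` U.

Lemma open_split_sym S U V : open_split S U V -> open_split S V U.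
Proof.
case=> oU oV cov disj; split => // [x /cov [] ?|x [ [Sx ?] ?]]; [by right|by left|].
exact: (disj x).
Qed.

Lemma open_splitUI S U1 U1' U2 U2' : open_split S U1 U1' -> open_split S U2 U2' ->
  open_split S (U1 `|` U2) (U1' `&` U2').
Proof.
case=> oU1 oU1' cov1 disj1 [oU2 oU2' cov2 disj2]; split.
- exact: openU.
- exact: openI.
- move=> x Sx; case: (cov1 x Sx) => [?|?]; first by left; left.
  by case: (cov2 x Sx) => [?|?]; [left; right|right].
- move=> x [ [Sx [U1x|U2x]] [U1'x U2'x]]; first exact: (disj1 x).
  exact: (disj2 x).
Qed.

Lemma connected_sub_open_split S U V : connected S -> open_split S U V ->
  S `&` U !=set0 -> S `<=` U.
Proof.
move=> cS [oU oV cov disj] SU.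
have SUE : S `&` U = S `&` ~` V.
  apply/seteqP; split => x [Sx Ux]; split => //; first by move=> Vx; exact: (disj x).
  by case: (cov x Sx).
have := cS _ SU (ex_intro2 _ _ U oU erefl) (ex_intro2 _ _ _ (open_closedC oV) SUE).
by move=> <- x [].
Qed.

Lemma totally_disconnected_open_split Z x y : totally_disconnected_subspace Z ->
  Z x -> Z y -> x <> y -> exists U V, [/\ open_split Z U V, U y & ~ U x].
Proof.
move=> zdZ Zx Zy nxy.
pose sx : set_type Z := exist _ x (mem_set Zx).
pose sy : set_type Z := exist _ y (mem_set Zy).
have nsxy : sy != sx by apply/eqP => /(congr1 sval) /= eyx; exact: nxy.
have [W [[[U oU eU] clW] Wy nWx]] := zdZ _ _ nsxy.
have [V oV eV] := closed_openC clW.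
have inU z (Zz : Z z) : U z = W (exist _ z (mem_set Zz)).
  by rewrite -eU.
have inV z (Zz : Z z) : V z = (~` W) (exist _ z (mem_set Zz)).
  by rewrite -eV.
exists U, V; split; last 2 first.
- by rewrite (inU y Zy).
- by rewrite (inU x Zx).
split => // [z Zz|z [ [Zz Uz] Vz]].
  have [Wz|nWz] := pselect (W (exist _ z (mem_set Zz))).
    by left; rewrite (inU z Zz).
  by right; rewrite (inV z Zz).
by move: Vz; rewrite (inV z Zz); apply; rewrite -(inU z Zz).
Qed.

Lemma totally_disconnected_split_compact Z C x : totally_disconnected_subspace Z ->
  C `<=` Z -> compact C -> Z x -> ~ C x ->
  exists U V, [/\ open_split Z U V, C `<=` U & ~ U x].
Proof.
move=> zdZ CZ cC Zx nCx.
pose F := [set U | ~ U x /\ exists V, open_split Z U V].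
have [U [nUx [V sp]] CU] : exists2 U, F U & C `<=` U.
  apply: compact_directed_cover => //.
  - by move=> U [_ [V []]].
  - exists set0; split => //; exists setT.
    by split; [exact: open0|exact: openT|move=> ? _; right|move=> ? [ [_ []]]].
  - move=> U1 U2 [nU1x [V1 sp1]] [nU2x [V2 sp2]].
    exists (U1 `|` U2) => //; split; first by case.
    by exists (V1 `&` V2); exact: open_splitUI.
  - move=> c Cc; have nxc : x <> c by move=> exc; apply: nCx; rewrite exc.
    have [U [V [sp Uc nUx]]] := totally_disconnected_open_split zdZ Zx (CZ c Cc) nxc.
    by exists U => //; split => //; exists V.
by exists U, V.
Qed.

Lemma connected_mod_bigcap (I : Type) (D : set I) (A : I -> set X) i0 N :
  D i0 -> compact (A i0) -> (forall i, D i -> closed (A i)) ->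
  (forall i j, D i -> D j -> exists2 k, D k & A k `<=` A i `&` A j) ->
  (forall i, D i -> connected_mod (N `|` A i) (A i)) ->
  connected_mod (N `|` \bigcap_(i in D) A i) (\bigcap_(i in D) A i).
Proof.
move=> Di0 cAi0 clA dirA mA U V [oU oV cov disj] capU.
have [i Di AiU] := compact_bigcap_sub_open Di0 cAi0 clA dirA oU capU.
have NU : N `<=` U.
  suff : N `|` A i `<=` U by move=> NAU x Nx; apply: NAU; left.
  apply: (mA i Di U (V `&` ~` A i)) => //; split => //.
  - by apply: openI => //; exact/closed_openC/clA.
  - move=> x NAx; have [Ax|nAx] := pselect (A i x); first by left; exact: AiU.
    have Nx : N x by case: NAx.
    by case: (cov x (or_introl Nx)) => [Ux|Vx]; [left|right].
  - move=> x [ [ [Nx|Ax] Ux] [Vx nAx]] //.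
    by apply: (disj x); split => //; split => //; left.
by move=> x [/NU|/capU].
Qed.

Lemma connected_mod_shrink Z N K0 K1 K2 : totally_disconnected_subspace Z ->
  closed K0 -> K0 `<=` K1 `|` K2 -> compact K2 -> K2 `<=` Z -> N `<=` Z ->
  N `&` K2 `<=` set0 ->
  connected_mod (N `|` K0) K0 -> connected_mod (N `|` K1) K1.
Proof.
move=> zdZ clK0 K012 cK2 K2Z NZ NK2 mK0 U V [oU oV cov disj] K1U x [Nx|/K1U//].
apply: contrapT => nUx.
(* Once x is separated from K2 inside Z, the split (U, V) of N `|` K1 extends
   to a split of N `|` K0 leaving x outside. *)
have nK2x : ~ K2 x by move=> K2x; exact: (NK2 x).
have [P [Q [[oP oQ covPQ disjPQ] K2P nPx]]] :=
  totally_disconnected_split_compact zdZ K2Z cK2 (NZ x Nx) nK2x.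
have K0UP : K0 `<=` U `|` P by move=> y /K012 [/K1U|/K2P]; [left|right].
have sp : open_split (N `|` K0) (U `|` P) (V `&` Q `&` ~` K0).
  split; [exact: openU|by apply: openI; [exact: openI|exact: closed_openC]| |].
  - move=> y NK0y; have [K0y|nK0y] := pselect (K0 y); first by left; exact: K0UP.
    have Ny : N y by case: NK0y.
    case: (cov y (or_introl Ny)) => [Uy|Vy]; first by left; left.
    by case: (covPQ y (NZ y Ny)) => [Py|Qy]; [left; right|right].
  - move=> y [ [ [Ny|K0y] UPy] [ [Vy Qy] nK0y]] //.
    case: UPy => [Uy|Py]; first by apply: (disj y); split => //; split => //; left.
    by apply: (disjPQ y); split => //; split => //; exact: NZ.
by case: (mK0 _ _ sp K0UP x (or_introl Nx)).
Qed.

End OpenSplit.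

Local Open Scope quotient_scope.

Section Collapse.
Variables (X : topologicalType) (T : set X).

Local Notation q := (\pi_(collapse T) : X -> collapse T).

Lemma pi_collapseP x y : q x = q y <-> x = y \/ (T x /\ T y).
Proof.
split.
  move/(eqquotP {eq_quot (collapse_rel T)}).
  by rewrite /collapse_rel => /orP [/eqP ->|/asboolP]; [left|right].
case=> [->//|TxTy]; apply/(eqquotP {eq_quot (collapse_rel T)}).
by rewrite /collapse_rel; apply/orP; right; apply/asboolP.
Qed.

Lemma connected_mod_collapse_connected S : T `<=` S -> connected_mod S T ->
  connected (q @` S).
Proof.
move=> TS mS B [b Bb] [C oC BC] [D clD BD].
have qc : continuous q := pi_continuous.
have sp : open_split S (q @^-1` C) (q @^-1` ~` D).
  split; [by move/continuousP : qc; apply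
         |by move/continuousP : qc; apply; exact: closed_openC| |].
  - move=> x Sx; have [Dx|nDx] := pselect (D (q x)); last by right.
    have : B (q x) by rewrite BD; split => //; exists x.
    by rewrite BC => -[_ Cx]; left.
  - move=> x [ [Sx Cx] nDx].
    have : B (q x) by rewrite BC; split => //; exists x.
    by rewrite BD => -[].
have SC : S `<=` q @^-1` C.
  have [TC|/nonsubset [t [Tt nCt]]] := pselect (T `<=` q @^-1` C).
    exact: mS sp TC.
  have TD : T `<=` q @^-1` ~` D.
    move=> y Ty; rewrite /preimage /=; have -> : q y = q t by apply/pi_collapseP; right.
    by case: sp => _ _ /(_ t (TS t Tt)) [].
  have [ [s Ss qsb] Cb] : ((q @` S) `&` C) b by rewrite -BC.
  have nDs := mS _ _ (open_split_sym sp) TD s Ss.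
  case: sp => _ _ _ disj; case: (disj s).
  by split => //; split => //; rewrite /preimage /= qsb.
apply/seteqP; split => [y|_ [x Sx <-]]; first by rewrite BC => -[].
by rewrite BC; split; [exists x|exact: SC].
Qed.

Lemma collapse_hd_sub S : hereditarily_disconnected (collapse T) ->
  T `<=` S -> connected_mod S T -> S `<=` T.
Proof.
move=> hd TS mS s Ss.
have [[t Tt]|T0] := pselect (T !=set0); last first.
  have sp : open_split S set0 setT.
    by split; [exact: open0|exact: openT|move=> ? _; right|move=> ? [ [_ []]]].
  by case: (mS _ _ sp (fun y Ty => T0 (ex_intro _ y Ty)) s Ss).
have [z Lz] := hd _ (ex_intro _ (q s) (ex_intro2 _ _ s Ss erefl))
  (connected_mod_collapse_connected TS mS).
have qs : (q @` S) (q s) by exists s.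
have qt : (q @` S) (q t) by exists t => //; exact: TS.
rewrite Lz in qs qt.
by have /pi_collapseP [->|[]] : q s = q t by rewrite qs qt.
Qed.

End Collapse.

Section CompactSub.
Variables (X : topologicalType) (Y T : set X).
Hypotheses (hX : hausdorff_space X) (YT : Y `|` T = [set: X]).
Hypothesis zdY : totally_disconnected_subspace Y.
Hypothesis hdT : hereditarily_disconnected (collapse T).

Section Minimal.
Variables M K : set X.
Hypotheses (cK : compact K) (TK : T `<=` K) (KM : K `<=` M).
Hypothesis mMK : connected_mod M K.

Let admissible K0 :=
  [/\ compact K0, T `<=` K0, K0 `<=` K & connected_mod ((M `\` K) `|` K0) K0].

(* Zorn's lemma is available for unions, so minimal admissible sets are
   sought among the complements K `\` U. *)
Lemma admissible_chain (F : set (set X)) :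
  (forall U, F U -> admissible (K `\` U)) -> total_on F subset ->
  admissible (K `\` \bigcup_(U in F) U).
Proof.
move=> FP Ftot; pose D := F `|` [set set0].
have D0 : D set0 by right.
have DP U : D U -> admissible (K `\` U).
  case=> [/FP //|->]; rewrite setD0; split => //.
  by rewrite setUC setDUK.
have capE : K `\` \bigcup_(U in F) U = \bigcap_(U in D) (K `\` U).
  apply/seteqP; split => x.
    move=> [Kx nFx] U [FU|->]; last by rewrite setD0.
    by split => // Ux; apply: nFx; exists U.
  move=> capx; have [Kx _] := capx set0 D0; split => // -[U FU Ux].
  by case: (capx U (or_introl FU)).
have totD U1 U2 : D U1 -> D U2 -> U1 `<=` U2 \/ U2 `<=` U1.
  case=> [FU1|->]; last by left.
  by case=> [FU2|->]; [exact: Ftot|right].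
rewrite capE; split.
- apply: (subclosed_compact _ cK); last by move=> x /(_ set0 D0) [].
  by apply: closed_bigI => U /DP [cKU _ _ _]; exact: compact_closed.
- by move=> t Tt U /DP [_ TKU _ _]; exact: TKU.
- by move=> x /(_ set0 D0) [].
- apply: (connected_mod_bigcap D0) => [|U /DP [cKU _ _ _]|U1 U2 DU1 DU2|U /DP []//].
  + by rewrite setD0.
  + exact: compact_closed.
  + case: (totD _ _ DU1 DU2) => [U12|U21]; [exists U2|exists U1] => //;
      rewrite subsetI; split => //; exact: setDS.
Qed.

Lemma exists_minimal_admissible : exists2 K0, admissible K0 &
  forall K1, admissible K1 -> K1 `<=` K0 -> K0 `<=` K1.
Proof.
have [U [aU maxU]] := Zorn_bigcup admissible_chain.
exists (K `\` U) => // K1 aK1 K1KU.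
apply: contrapT => /nonsubset [x [ [Kx nUx] nK1x]].
apply: (maxU (U `|` (K `\` K1))).
  by split => [y Uy|/(_ x (or_intror (conj Kx nK1x)))]; [left|].
suff -> : K `\` (U `|` (K `\` K1)) = K1 by [].
apply/seteqP; split => [y [Ky nUKy]|y K1y].
  by apply: contrapT => nK1y; apply: nUKy; right.
have [Ky nUy] := K1KU y K1y.
by split => // -[//|[_]].
Qed.

Lemma minimal_admissible_sub K0 : admissible K0 ->
  (forall K1, admissible K1 -> K1 `<=` K0 -> K0 `<=` K1) -> K0 `<=` T.
Proof.
move=> [cK0 TK0 K0K mK0] minK0.
apply: (collapse_hd_sub hdT TK0) => U V [oU oV cov disj] TU.
have clK0 := compact_closed hX cK0.
have K0UV x : K0 x -> U x -> ~ V x by move=> K0x Ux Vx; apply: (disj x).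
have YnT x : ~ T x -> Y x by move=> nTx; have : [set: X] x by []; rewrite -YT => -[].
have aK0V : admissible (K0 `\` V).
  split.
  - by apply: compact_closedI => //; exact: open_closedC.
  - by move=> t Tt; split; [exact: TK0|apply: K0UV; [exact: TK0|exact: TU]].
  - by move=> x [/K0K].
  apply: (connected_mod_shrink zdY clK0 (K2 := K0 `\` U)).
  - move=> x K0x; have [Ux|nUx] := pselect (U x); last by right.
    by left; split => //; exact: K0UV.
  - by apply: compact_closedI => //; exact: open_closedC.
  - by move=> x [_ nUx]; apply: YnT => /TU.
  - by move=> x [_ nKx]; apply: YnT => /TK.
  - by move=> x [ [_ nKx] [/K0K]].
  - exact: mK0.
move=> x K0x; have [_ nVx] := minK0 _ aK0V (@subDsetl _ _ _) x K0x.
by case: (cov x K0x).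
Qed.

Lemma connected_mod_compact_sub : M `<=` K.
Proof.
have [K0 aK0 minK0] := exists_minimal_admissible.
have K0T := minimal_admissible_sub aK0 minK0.
case: aK0 => _ TK0 _ mK0.
have MKT : (M `\` K) `|` K0 `<=` T.
  apply: (collapse_hd_sub hdT) => [x /TK0|U V sp TU]; first by right.
  by apply: (mK0 U V sp) => x /K0T /TU.
move=> x Mx; have [//|nKx] := pselect (K x).
by have /TK := MKT x (or_introl (conj Mx nKx)).
Qed.

End Minimal.
End CompactSub.

Section Hyperspace.
Variable X : topologicalType.

Lemma hset_inj : injective (@hset X).
Proof. by case=> a pa [b pb] /= eab; subst b; congr Hyper; exact: Prop_irrelevance. Qed.

Lemma open_vietoris_sub (i : vietoris_index X) : open i.2 -> open (vietoris_sub i).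
Proof.
move=> oi; exists [set vietoris_sub i]; last by rewrite bigcup_set1.
by move=> _ ->; exact: finI_from1.
Qed.

Lemma vietoris_continuous (S : topologicalType) (f : S -> hyperspace X) :
  (forall i : vietoris_index X, open i.2 -> open (f @^-1` vietoris_sub i)) ->
  continuous f.
Proof.
move=> fsub; apply/continuousP => _ [D sD <-].
rewrite preimage_bigcup; apply: bigcup_open => _ /sD [I sI <-].
rewrite preimage_bigcap openE => x Ix.
apply: filter_bigI => i Ii; apply: open_nbhs_nbhs; split; last exact: Ix.
by apply: fsub; move: (sI i Ii); rewrite inE.
Qed.

Lemma connected_hyperspace_connected_mod (CC : set (hyperspace X)) B K :
  connected CC -> CC B -> hset B `<=` K ->
  connected_mod (K `|` \bigcup_(C in CC) hset C) K.
Proof.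
move=> cCC CCB BK U V [oU oV cov disj] KU.
have CCU : CC `<=` vietoris_sub (true, U).
  apply: (connected_sub_open_split cCC (V := vietoris_sub (false, V))).
    split; [exact: open_vietoris_sub|exact: open_vietoris_sub| |].
      move=> C CCC; have [CU|/nonsubset [x [Cx nUx]]] := pselect (hset C `<=` U).
        by left.
      right; exists x; split => //.
      by case: (cov x (or_intror (ex_intro2 _ _ C CCC Cx))).
    move=> C [ [CCC /= CU] [x [Cx Vx]]]; apply: (disj x).
    by split => //; split; [right; exists C|exact: CU].
  by exists B; split => //= x /BK /KU.
by move=> x [/KU //|[C /CCU CU Cx]]; exact: CU.
Qed.

Lemma connected_hyperspace_sub (T : set X) (CC : set (hyperspace X)) A B :
  hausdorff_space X -> totally_disconnected_subspace T -> compact T ->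
  connected CC -> CC A -> CC B ->
  (forall C, CC C -> hset C `<=` hset B `|` T) -> hset A `<=` hset B.
Proof.
move=> hX zdT cT cCC CCA CCB CCBT x Ax; apply: contrapT => nBx.
have Tx : T x by case: (CCBT A CCA x Ax).
have clT := compact_closed hX cT.
have cBT : compact (hset B `&` T) := compact_closedI (hset_prop B).2 clT.
have [W [W' [ [oW oW' cov disj] BTW nWx]]] :=
  totally_disconnected_split_compact zdT (@subIsetr _ _ _) cBT Tx (fun h => nBx h.1).
have sub : CC `<=` vietoris_sub (false, W' `&` ~` hset B).
  apply: (connected_sub_open_split cCC (V := vietoris_sub (true, ~` T `|` W))).
    split.
    - apply: open_vietoris_sub; apply: openI => //.
      exact/closed_openC/(compact_closed hX (hset_prop B).2).
    - by apply: open_vietoris_sub; apply: openU => //; exact: closed_openC.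
    - move=> C CCC.
      have [CW|/nonsubset [y [Cy nTWy]]] := pselect (hset C `<=` ~` T `|` W).
        by right.
      have [Ty nWy] : T y /\ ~ W y.
        by split; [apply: contrapT => nTy|move=> Wy]; apply: nTWy; [left|right].
      left; exists y; split => //; split; first by case: (cov y Ty).
      by move=> By; apply: nWy; apply: BTW.
    - move=> C [ [CCC [y [Cy [W'y nBy]]]] /= CW].
      have Ty : T y by case: (CCBT C CCC y Cy).
      by case: (CW y Cy) => // Wy; apply: (disj y).
  exists A; split => //; exists x; split => //; split => //.
  by case: (cov x Tx).
by have [y [By [_ nBy]]] := sub B CCB.
Qed.

Lemma hyperspace_hd (Y T : set X) : hausdorff_space X -> Y `|` T = [set: X] ->
  totally_disconnected_subspace Y -> totally_disconnected_subspace T -> compact T ->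
  hereditarily_disconnected (collapse T) -> hereditarily_disconnected (hyperspace X).
Proof.
move=> hX YT zdY zdT cT hdT CC [B0 CCB0] cCC; exists B0.
have sub A B : CC A -> CC B -> hset A `<=` hset B.
  move=> CCA CCB; apply: (connected_hyperspace_sub hX zdT cT cCC CCA CCB).
  have BT_sub := connected_mod_compact_sub hX YT zdY hdT
    (compactU (hset_prop B).2 cT) (@subsetUr _ _ _) (@subsetUl _ _ _)
    (connected_hyperspace_connected_mod cCC CCB (@subsetUl _ _ _)).
  by move=> C CCC x Cx; apply: BT_sub; right; exists C.
apply/seteqP; split => [A CCA|_ ->//]; apply: hset_inj.
by apply/seteqP; split; exact: sub.
Qed.

Definition hyper_adjoin (T : set X) (cT : compact T) (x : X) : hyperspace X :=
  @Hyper X (T `|` [set x])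
    (conj (ex_intro _ x (or_intror erefl)) (compactU cT (@compact_set1 X x))).

Lemma hyper_adjoin_continuous (T : set X) (cT : compact T) :
  continuous (hyper_adjoin cT).
Proof.
apply: vietoris_continuous; case=> -[] U /= oU.
  have [TU|nTU] := pselect (T `<=` U).
    suff -> : hyper_adjoin cT @^-1` [set A | hset A `<=` U] = U by [].
    apply/seteqP; split => x /=; first by apply; right.
    by move=> Ux y [/TU|->].
  suff -> : hyper_adjoin cT @^-1` [set A | hset A `<=` U] = set0 by exact: open0.
  by apply/seteqP; split => x //= TxU; apply: nTU => y Ty; apply: TxU; left.
have [[t [Tt Ut]]|nTU] := pselect (T `&` U !=set0).
  suff -> : hyper_adjoin cT @^-1` [set A | hset A `&` U !=set0] = setT by exact: openT.
  by apply/seteqP; split => x // _; exists t; split => //; left.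
suff -> : hyper_adjoin cT @^-1` [set A | hset A `&` U !=set0] = U by [].
apply/seteqP; split => x /=; last by move=> Ux; exists x; split => //; right.
by case=> y [ [Ty|->] Uy] //; case: nTU; exists y.
Qed.

Lemma collapse_hd (T : set X) : compact T ->
  hereditarily_disconnected (hyperspace X) -> hereditarily_disconnected (collapse T).
Proof.
move=> cT.
have adjoin_pi : {homo hyper_adjoin cT : a b /
    \pi_(collapse T) a == \pi_(collapse T) b >-> a == b}.
  move=> a b /eqP /pi_collapseP [->//|[Ta Tb]]; apply/eqP/hset_inj => /=.
  by apply/seteqP; split => y [Ty|->]; left.
have adjoin_cont : continuous (hyper_adjoin cT \o repr : collapse T -> _).
  exact: (@repr_comp_continuous X {eq_quot (collapse_rel T)} _ _
    (@hyper_adjoin_continuous T cT) adjoin_pi).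
apply: (continuous_inj_hd adjoin_cont).
move=> z z' /(congr1 (@hset X)) /= e; rewrite -[z]reprK -[z']reprK.
apply/pi_collapseP.
have : (T `|` [set repr z']) (repr z) by rewrite -e; right.
have : (T `|` [set repr z]) (repr z') by rewrite e; right.
by case=> [Tz'|->]; [case=> [Tz|->]; [right|left]|left].
Qed.

End Hyperspace.

Theorem corollary5p6 (X : topologicalType) (Y T : set X) :
  hausdorff_space X ->
  Y `|` T = [set: X] ->
  totally_disconnected_subspace Y ->
  totally_disconnected_subspace T ->
  compact T ->
  (hereditarily_disconnected (hyperspace X) <->
   hereditarily_disconnected (collapse T)).
Proof.
move=> hX YT zdY zdT cT; split; first exact: collapse_hd.
exact: hyperspace_hd hX YT zdY zdT cT.
Qed.
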